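(* Let $p+q=3$. The Hurwitz algebra $(\mathcal{G}(p,q),\bullet,N)$ is classified by the signature as follows. - It is isomorphic to the octonions $\mathbb{O}$ if $(p,q)=(3,0)$. - It is isomorphic to the split-octonions $\mathbb{O}_s$ if $(p,q)\in\{(2,1),(1,2),(0,3)\}$.
   Context: Let $p,q\ge0$ with $p+q=3$. $\mathcal{G}(p,q)$ is the real Clifford (geometric) algebra generated by an orthonormal basis $e_1,e_2,e_3$ with $e_i^2=\lambda_i\in\{\pm1\}$ (exactly $p$ of them $+1$) and $e_ie_j=-e_je_i$ for $i\neq j$. $\langle x\rangle_k$ is the grade-$k$ part. We write $x_+=\langle x\rangle_0+\langle x\rangle_2$ and $x_-=\langle x\rangle_1+\langle x\rangle_3$. Clifford conjugation $\tilde x$ multiplies grades $0,1,2,3$ by $+1,-1,-1,+1$. Full grade inversion is $x^*=2\langle x\rangle_0-x$. The product is $x\bullet y = x_+y_+ + \widetilde{y_-}x_- + y_-x_+ + x_-\widetilde{y_+}$. The quadratic form $N$ is defined by $x\bullet x^*=N(x)1$, where $x\bullet x^*$ is a real scalar. $(\mathcal{G}(p,q),\bullet,N)$ is a unital 8-dimensional algebra with nondegenerate multiplicative quadratic form $N$, i.e. a Hurwitz algebra. Hurwitz algebras are unital real algebras with a nondegenerate quadratic form $n$ satisfying $n(xy)=n(x)n(y)$; the 8-dimensional ones are $\mathbb{O}$ (octonions, the division case) and $\mathbb{O}_s$ (split-octonions). *)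

From HB Require Import structures.
From mathcomp Require Import all_boot all_order all_algebra.
From mathcomp Require Import reals.
Set Implicit Arguments. Unset Strict Implicit. Unset Printing Implicit Defensive.
Import Order.TTheory GRing.Theory Num.Theory.
Local Open Scope ring_scope.

Section Defs.
Variable R : realType.

Definition hurwitz_iso (U V : lmodType R)
    (mulU : U -> U -> U) (oneU : U) (nU : U -> R)
    (mulV : V -> V -> V) (oneV : V) (nV : V -> R) : Prop :=
  exists f : U -> V,
    [/\ forall (a : R) (x y : U), f (a *: x + y) = a *: f x + f y,
        bijective f,
        forall x y, f (mulU x y) = mulV (f x) (f y),
        f oneU = oneV
      & forall x, nV (f x) = nU x].

(* The Clifford algebra G(p,q): an element is a family of real coefficients *)
(* indexed by the subsets A of {e_1,e_2,e_3} (blade e_A = product of the    *)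
(* e_i, i in A, in increasing order).  lam i = e_(i+1)^2.                   *)
Local Notation cl := {ffun {set 'I_3} -> R^o}.

Definition blade (A : {set 'I_3}) : cl := [ffun B : {set 'I_3} => ((B == A)%:R : R^o)].

(* number of transpositions needed to bring e_A e_B to normal order *)
Definition cl_swaps (A B : {set 'I_3}) : nat :=
  \sum_(i < 3) \sum_(j < 3) ((i \in A) && (j \in B) && (j < i)%N : nat).

(* e_A e_B = cl_sign lam A B * e_(A symmetric-difference B) *)
Definition cl_sign (lam : 'I_3 -> R) (A B : {set 'I_3}) : R :=
  (-1) ^+ cl_swaps A B * \prod_(i in A :&: B) lam i.

Definition gp (lam : 'I_3 -> R) (x y : cl) : cl :=
  \sum_(A : {set 'I_3}) \sum_(B : {set 'I_3})
     (x A * y B * cl_sign lam A B) *: blade ((A :\: B) :|: (B :\: A)).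

Definition cl_one : cl := blade set0.

Definition grade (k : nat) (x : cl) : cl :=
  [ffun A : {set 'I_3} => if #|A| == k then x A else 0].

Definition even_part (x : cl) : cl := grade 0 x + grade 2 x.
Definition odd_part (x : cl) : cl := grade 1 x + grade 3 x.

Definition cl_conj (x : cl) : cl :=
  grade 0 x - grade 1 x - grade 2 x + grade 3 x.

Definition cl_star (x : cl) : cl := 2%:R *: grade 0 x - x.

Definition bullet (lam : 'I_3 -> R) (x y : cl) : cl :=
  gp lam (even_part x) (even_part y)
  + gp lam (cl_conj (odd_part y)) (odd_part x)
  + gp lam (odd_part y) (even_part x)
  + gp lam (odd_part x) (cl_conj (even_part y)).

(* N(x) defined by x . x^* = N(x) 1 : the scalar (grade 0) coefficient *)
Definition cl_N (lam : 'I_3 -> R) (x : cl) : R := bullet lam x (cl_star x) set0.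

Definition cd_mul (A : lmodType R) (m : A -> A -> A) (c : A -> A) (g : R)
    (x y : A * A) : A * A :=
  (m x.1 y.1 + g *: m (c y.2) x.2, m y.2 x.1 + m x.2 (c y.1)).
Definition cd_conj (A : lmodType R) (c : A -> A) (x : A * A) : A * A :=
  (c x.1, - x.2).
Definition cd_norm (A : lmodType R) (n : A -> R) (g : R) (x : A * A) : R :=
  n x.1 - g * n x.2.

Definition Rr : lmodType R := R^o.
Definition r_mul (x y : Rr) : Rr := (x : R) * (y : R).
Definition r_conj (x : Rr) : Rr := x.
Definition r_norm (x : Rr) : R := (x : R) ^+ 2.

Definition Cx : lmodType R := (Rr * Rr)%type.
Definition c_mul : Cx -> Cx -> Cx := cd_mul r_mul r_conj (-1).
Definition c_conj : Cx -> Cx := cd_conj r_conj.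
Definition c_norm : Cx -> R := cd_norm r_norm (-1).

Definition Hq : lmodType R := (Cx * Cx)%type.
Definition h_mul : Hq -> Hq -> Hq := cd_mul c_mul c_conj (-1).
Definition h_conj : Hq -> Hq := cd_conj c_conj.
Definition h_norm : Hq -> R := cd_norm c_norm (-1).

Definition Oc : lmodType R := (Hq * Hq)%type.
Definition oct_one : Oc := (((1 : Rr, 0 : Rr), (0 : Cx)), 0 : Hq).
Definition oct_mul : Oc -> Oc -> Oc := cd_mul h_mul h_conj (-1).
Definition oct_norm : Oc -> R := cd_norm h_norm (-1).
Definition soct_mul : Oc -> Oc -> Oc := cd_mul h_mul h_conj 1.
Definition soct_norm : Oc -> R := cd_norm h_norm 1.

End Defs.

From HB Require Import structures.
From mathcomp Require Import all_boot all_order all_algebra.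
From mathcomp Require Import reals.
From mathcomp Require Import ring.
Set Implicit Arguments. Unset Strict Implicit. Unset Printing Implicit Defensive.
Import Order.TTheory GRing.Theory Num.Theory.
Local Open Scope ring_scope.

(* The eight blades e_A, A a subset of {e1, e2, e3}, form a basis of G(p,q), and the
   bullet product of two blades is again a blade up to a sign.  For each of the eight
   sign patterns of (e1^2, e2^2, e3^2) we exhibit a signed permutation of the standard
   basis of the Cayley--Dickson double of the quaternions (with parameter -1 in the
   Euclidean case and 1 otherwise) realising the same multiplication table.  The induced
   linear bijection is then multiplicative; since it also carries the grade inversion
   x^* to octonion conjugation and fixes the unit, it carries x . x^* = N(x) 1 to
   u conj(u) = n(u) 1, so it preserves the quadratic forms. *)

Definition i0 : 'I_3 := @Ordinal 3 0 isT.
Definition i1 : 'I_3 := @Ordinal 3 1 isT.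
Definition i2 : 'I_3 := @Ordinal 3 2 isT.

Definition setb (a b c : bool) : {set 'I_3} := [set i : 'I_3 | nth false [:: a; b; c] i].

Lemma in_setb a b c i : (i \in setb a b c) = nth false [:: a; b; c] i.
Proof. by rewrite inE. Qed.

Lemma setb_mem (A : {set 'I_3}) : setb (i0 \in A) (i1 \in A) (i2 \in A) = A.
Proof.
apply/setP => i; rewrite in_setb.
by case: i => [[|[|[|?]]] ?] //=; congr (_ \in A); apply: val_inj.
Qed.

Lemma set3_ind (P : {set 'I_3} -> Prop) :
  (forall a b c, P (setb a b c)) -> forall A, P A.
Proof. by move=> PA A; rewrite -(setb_mem A). Qed.

Lemma setb0 : setb false false false = set0.
Proof. by apply/setP => i; rewrite in_set0 in_setb; case: i => [[|[|[|?]]] ?]. Qed.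

Lemma card_setb a b c : #|setb a b c| = (a + b + c)%N.
Proof.
rewrite -sum1_card big_mkcond /= !big_ord_recr big_ord0 /= !in_setb /=.
by case: a; case: b; case: c.
Qed.

Lemma card_eq_set3 (T : eqType) (f : 'I_3 -> T) (t : T) :
  #|[set i | f i == t]| = ((f i0 == t) + (f i1 == t) + (f i2 == t))%N.
Proof.
rewrite -card_setb; apply: eq_card => i; rewrite inE in_setb.
by case: i => [[|[|[|?]]] ?] //=; congr (f _ == t); apply: val_inj.
Qed.

Lemma setI_setb a b c a' b' c' :
  setb a b c :&: setb a' b' c' = setb (a && a') (b && b') (c && c').
Proof. by apply/setP => i; rewrite !inE; case: i => [[|[|[|?]]] ?]. Qed.

Definition symd (A B : {set 'I_3}) := (A :\: B) :|: (B :\: A).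

Lemma symdC A B : symd A B = symd B A.
Proof. by rewrite /symd setUC. Qed.

Lemma symd_setb a b c a' b' c' :
  symd (setb a b c) (setb a' b' c') = setb (a (+) a') (b (+) b') (c (+) c').
Proof.
apply/setP => i; rewrite !inE.
by case: i => [[|[|[|?]]] ?] //=; case: a; case: a'; case: b; case: b'; case: c; case: c'.
Qed.

Lemma cl_swaps_setb a b c a' b' c' :
  cl_swaps (setb a b c) (setb a' b' c') = ((b && a') + (c && a') + (c && b'))%N.
Proof.
rewrite /cl_swaps !big_ord_recr !big_ord0 /= !in_setb /=.
by case: a; case: a'; case: b; case: b'; case: c; case: c'.
Qed.

Lemma prod_setb (R : comPzRingType) (F : 'I_3 -> R) a b c :
  \prod_(i in setb a b c) F i =
  (if a then F i0 else 1) * (if b then F i1 else 1) * (if c then F i2 else 1).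
Proof.
rewrite big_mkcond /= !big_ord_recr big_ord0 /= !in_setb /= mul1r.
by congr (_ * _ * _); congr (if _ then F _ else _); apply: val_inj.
Qed.

Definition blade_index (A : {set 'I_3}) : nat := (i0 \in A) + 2 * (i1 \in A) + 4 * (i2 \in A).

Definition blade_of (i : nat) : {set 'I_3} := setb (odd i) (odd i./2) (odd i./2./2).

Lemma blade_index_setb a b c : blade_index (setb a b c) = (a + 2 * b + 4 * c)%N.
Proof. by rewrite /blade_index !in_setb. Qed.

Lemma blade_index_lt A : (blade_index A < 8)%N.
Proof. by elim/set3_ind: A => a b c; rewrite blade_index_setb; case: a; case: b; case: c. Qed.

Lemma blade_indexK : cancel blade_index blade_of.
Proof. by elim/set3_ind => a b c; rewrite blade_index_setb; case: a; case: b; case: c. Qed.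

Lemma blade_ofK i : (i < 8)%N -> blade_index (blade_of i) = i.
Proof. by case: i => [|[|[|[|[|[|[|[|i]]]]]]]] // _; rewrite blade_index_setb. Qed.

Lemma blade_index_inj : injective blade_index.
Proof. exact: can_inj blade_indexK. Qed.

Lemma sum_blade_index (V : nmodType) (F : nat -> V) :
  \sum_A F (blade_index A) = \sum_(i < 8) F i.
Proof.
rewrite (reindex (fun i : 'I_8 => blade_of i)) /=.
  by apply: eq_bigr => i _; rewrite blade_ofK.
exists (fun A => Ordinal (blade_index_lt A)) => [i _ | A _] /=.
  by apply: val_inj; rewrite /= blade_ofK.
exact: blade_indexK.
Qed.

Section CliffordBullet.
Variables (R : realType) (lam : 'I_3 -> R).
Local Notation cl := {ffun {set 'I_3} -> R^o}.

Lemma card_set3 (A : {set 'I_3}) : (#|A| <= 3)%N.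
Proof. by have := max_card A; rewrite card_ord. Qed.

Definition conj_sign (A : {set 'I_3}) : R :=
  if (#|A| == 1%N) || (#|A| == 2%N) then -1 else 1.

(* On blades only one of the four terms of [bullet] survives, according to the
   parities of the two grades; [bulletE] shows that e_A . e_B is this sign times
   the blade of the symmetric difference. *)
Definition bullet_sign (A B : {set 'I_3}) : R :=
  if odd #|A| then
    if odd #|B| then conj_sign B * cl_sign lam B A else conj_sign B * cl_sign lam A B
  else if odd #|B| then cl_sign lam B A else cl_sign lam A B.

Lemma even_partE (x : cl) A : even_part x A = if odd #|A| then 0 else x A.
Proof.
rewrite /even_part /grade !ffunE; have := card_set3 A.
by case: #|A| => [|[|[|[|n]]]] //= _; rewrite ?addr0 ?add0r.
Qed.

Lemma odd_partE (x : cl) A : odd_part x A = if odd #|A| then x A else 0.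
Proof.
rewrite /odd_part /grade !ffunE; have := card_set3 A.
by case: #|A| => [|[|[|[|n]]]] //= _; rewrite ?addr0 ?add0r.
Qed.

Lemma cl_conjE (x : cl) A : cl_conj x A = conj_sign A * x A.
Proof.
rewrite /cl_conj /conj_sign /grade !ffunE; have := card_set3 A.
by case: #|A| => [|[|[|[|n]]]] //= _;
  rewrite ?subr0 ?addr0 ?sub0r ?add0r ?mul1r ?mulN1r.
Qed.

Lemma bulletE (x y : cl) :
  bullet lam x y = \sum_A \sum_B (x A * y B * bullet_sign A B) *: blade R (symd A B).
Proof.
rewrite /bullet /gp [X in _ + X + _ + _]exchange_big [X in _ + X + _]exchange_big.
rewrite -!big_split; apply: eq_bigr => A _; rewrite -!big_split.
apply: eq_bigr => B _ /=; rewrite -/(symd A B) -/(symd B A) (symdC B A).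
rewrite !cl_conjE !even_partE !odd_partE /bullet_sign.
by case: (odd #|A|); case: (odd #|B|);
  rewrite ?mulr0 ?mul0r ?scale0r ?add0r ?addr0; congr (_ *: _); ring.
Qed.

Lemma cl_starE (x : cl) : cl_star x = (2 * x set0) *: cl_one R - x.
Proof.
congr (_ - _); apply/ffunP => A; rewrite !ffunE cards_eq0.
by case: eqP => [->|_]; rewrite /GRing.scale /= ?mulr1 ?mulr0.
Qed.

End CliffordBullet.

Section OctonionCoordinates.
Variable R : realType.
Local Notation O := (Oc R).

Lemma oc_ext (u v : O) :
  u.1.1.1 = v.1.1.1 :> R -> u.1.1.2 = v.1.1.2 :> R -> u.1.2.1 = v.1.2.1 :> R ->
  u.1.2.2 = v.1.2.2 :> R -> u.2.1.1 = v.2.1.1 :> R -> u.2.1.2 = v.2.1.2 :> R ->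
  u.2.2.1 = v.2.2.1 :> R -> u.2.2.2 = v.2.2.2 :> R -> u = v.
Proof.
by move: u v => [[[? ?][? ?]][[? ?][? ?]]] [[[? ?][? ?]][[? ?][? ?]]] /= -> -> -> -> -> -> -> ->.
Qed.

Definition oc_dot (u v : O) : R :=
  u.1.1.1 * v.1.1.1 + u.1.1.2 * v.1.1.2 + u.1.2.1 * v.1.2.1 + u.1.2.2 * v.1.2.2 +
  u.2.1.1 * v.2.1.1 + u.2.1.2 * v.2.1.2 + u.2.2.1 * v.2.2.1 + u.2.2.2 * v.2.2.2.

Lemma oc_dot_is_linear (w : O) : scalar (oc_dot w).
Proof.
move=> a [[[? ?][? ?]][[? ?][? ?]]] [[[? ?][? ?]][[? ?][? ?]]].
rewrite /oc_dot /= /GRing.scale /=; ring.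
Qed.

HB.instance Definition _ (w : O) :=
  GRing.isLinear.Build R O R *%R (oc_dot w) (oc_dot_is_linear w).

Definition oct_unit (k : nat) : O :=
  (((((k == 0)%:R : R), ((k == 1)%:R : R)), (((k == 2)%:R : R), ((k == 3)%:R : R))),
   ((((k == 4)%:R : R), ((k == 5)%:R : R)), (((k == 6)%:R : R), ((k == 7)%:R : R)))).

Definition xor_index (j k : nat) : nat :=
  (odd j (+) odd k) + 2 * (odd j./2 (+) odd k./2) + 4 * (odd j./2./2 (+) odd k./2./2).

Definition oc_coord (u : O) (k : nat) : R :=
  nth 0 [:: u.1.1.1; u.1.1.2; u.1.2.1; u.1.2.2; u.2.1.1; u.2.1.2; u.2.2.1; u.2.2.2] k.

Lemma oc_dotC (u v : O) : oc_dot u v = oc_dot v u.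
Proof. by rewrite /oc_dot; ring. Qed.

Lemma oc_dot_unit k u : (k < 8)%N -> oc_dot (oct_unit k) u = oc_coord u k.
Proof.
by case: k => [|[|[|[|[|[|[|[|k]]]]]]]] // _; rewrite /oc_dot /=; ring.
Qed.

Lemma oc_coord_unit j k : (k < 8)%N -> oc_coord (oct_unit j) k = (j == k)%:R.
Proof. by case: k => [|[|[|[|[|[|[|[|k]]]]]]]]. Qed.

Lemma oct_unit_decomp u : \sum_(k < 8) oc_coord u k *: oct_unit k = u.
Proof.
rewrite !big_ord_recr big_ord0 /=.
move: u => [[[? ?][? ?]][[? ?][? ?]]].
by apply: oc_ext; rewrite /= /oc_coord /GRing.scale /=; ring.
Qed.

End OctonionCoordinates.

Ltac oc_coordinatewise :=
  apply: oc_ext; rewrite /= /r_mul /r_conj /r_norm /oc_dot /oc_coord /GRing.scale /=; ring.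

Section CayleyDicksonOctonions.
Variables (R : realType) (g : R).
Local Notation O := (Oc R).

Definition omul : O -> O -> O := cd_mul (@h_mul R) (@h_conj R) g.
Definition onorm : O -> R := cd_norm (@h_norm R) g.
Definition oconj : O -> O := cd_conj (@h_conj R).

Lemma omulDl a (u v w : O) : omul (a *: u + v) w = a *: omul u w + omul v w.
Proof.
move: u v w => [[[? ?][? ?]][[? ?][? ?]]] [[[? ?][? ?]][[? ?][? ?]]] [[[? ?][? ?]][[? ?][? ?]]].
oc_coordinatewise.
Qed.

Lemma omulDr a (u v w : O) : omul w (a *: u + v) = a *: omul w u + omul w v.
Proof.
move: u v w => [[[? ?][? ?]][[? ?][? ?]]] [[[? ?][? ?]][[? ?][? ?]]] [[[? ?][? ?]][[? ?][? ?]]].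
oc_coordinatewise.
Qed.

Lemma omul0l (w : O) : omul 0 w = 0.
Proof.
have E := omulDl 1 0 0 w; rewrite !scale1r addr0 in E.
by apply: (@addrI _ (omul 0 w)); rewrite addr0 -E.
Qed.

Lemma omul0r (w : O) : omul w 0 = 0.
Proof.
have E := omulDr 1 0 0 w; rewrite !scale1r addr0 in E.
by apply: (@addrI _ (omul w 0)); rewrite addr0 -E.
Qed.

Lemma omulZl a (u w : O) : omul (a *: u) w = a *: omul u w.
Proof. by rewrite -[a *: u]addr0 omulDl omul0l addr0. Qed.

Lemma omulZr a (u w : O) : omul w (a *: u) = a *: omul w u.
Proof. by rewrite -[a *: u]addr0 omulDr omul0r addr0. Qed.

Lemma omul_sumlZ I (r : seq I) (c : I -> R) (F : I -> O) w :
  omul (\sum_(i <- r) c i *: F i) w = \sum_(i <- r) c i *: omul (F i) w.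
Proof.
elim: r => [|i r IHr]; first by rewrite !big_nil omul0l.
by rewrite !big_cons omulDl IHr.
Qed.

Lemma omul_sumrZ I (r : seq I) (c : I -> R) (F : I -> O) w :
  omul w (\sum_(i <- r) c i *: F i) = \sum_(i <- r) c i *: omul w (F i).
Proof.
elim: r => [|i r IHr]; first by rewrite !big_nil omul0r.
by rewrite !big_cons omulDr IHr.
Qed.

Lemma omul_oconj (u : O) : omul u (oconj u) = onorm u *: oct_one R.
Proof.
move: u => [[[? ?][? ?]][[? ?][? ?]]].
rewrite /onorm /cd_norm /h_norm /c_norm /cd_norm; oc_coordinatewise.
Qed.

Lemma oconjE (u : O) : oconj u = (2 * oc_dot (oct_one R) u) *: oct_one R - u.
Proof. move: u => [[[? ?][? ?]][[? ?][? ?]]]; oc_coordinatewise. Qed.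

(* The Cayley--Dickson units multiply like the group (Z/2)^3, up to a factor 1, -1, g
   or -g. *)
Definition unit_sign (j k : nat) : R :=
  oc_coord (omul (oct_unit R j) (oct_unit R k)) (xor_index j k).

Lemma omul_unit j k : (j < 8)%N -> (k < 8)%N ->
  omul (oct_unit R j) (oct_unit R k) = unit_sign j k *: oct_unit R (xor_index j k).
Proof.
by case: j => [|[|[|[|[|[|[|[|j]]]]]]]] // _; case: k => [|[|[|[|[|[|[|[|k]]]]]]]] // _;
  rewrite /unit_sign /oc_coord /=; oc_coordinatewise.
Qed.

End CayleyDicksonOctonions.

Section BladeBasis.
Variables (R : realType) (lam : 'I_3 -> R) (g : R) (img : {set 'I_3} -> Oc R).
Local Notation cl := {ffun {set 'I_3} -> R^o}.

Hypothesis img_set0 : img set0 = oct_one R.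
Hypothesis img_orthonormal : forall A B, oc_dot (img A) (img B) = (A == B)%:R.
Hypothesis img_complete : forall u, \sum_A oc_dot (img A) u *: img A = u.
Hypothesis img_mul :
  forall A B, omul g (img A) (img B) = bullet_sign lam A B *: img (symd A B).

Definition blade_map (x : cl) : Oc R := \sum_A x A *: img A.
Definition blade_coord (u : Oc R) : cl := [ffun A => oc_dot (img A) u].

Lemma blade_map_is_linear : linear blade_map.
Proof.
move=> a x y; rewrite /blade_map scaler_sumr -big_split; apply: eq_bigr => A _.
by rewrite !ffunE scalerDl scalerA.
Qed.

HB.instance Definition _ :=
  GRing.isLinear.Build R cl (Oc R) *:%R blade_map blade_map_is_linear.

Lemma blade_map_blade A : blade_map (blade R A) = img A.
Proof.
rewrite /blade_map (bigD1 A) //= big1 => [|B /negPf nBA]; rewrite ffunE.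
  by rewrite eqxx scale1r addr0.
by rewrite nBA scale0r.
Qed.

Lemma oc_dot_blade_map A x : oc_dot (img A) (blade_map x) = x A.
Proof.
rewrite linear_sum (bigD1 A) //= big1 => [|B /negPf nAB]; rewrite linearZ /=.
  by rewrite img_orthonormal eqxx mulr1 addr0.
by rewrite img_orthonormal eq_sym nAB mulr0.
Qed.

Lemma blade_mapK : cancel blade_map blade_coord.
Proof. by move=> x; apply/ffunP => A; rewrite ffunE oc_dot_blade_map. Qed.

Lemma blade_coordK : cancel blade_coord blade_map.
Proof.
move=> u; rewrite -[RHS]img_complete; apply: eq_bigr => A _; by rewrite ffunE.
Qed.

Lemma blade_map_star x : blade_map (cl_star x) = oconj (blade_map x).
Proof.
by rewrite cl_starE oconjE linearB linearZ /= blade_map_blade img_set0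
  -img_set0 oc_dot_blade_map.
Qed.

Lemma blade_map_bullet x y :
  blade_map (bullet lam x y) = omul g (blade_map x) (blade_map y).
Proof.
transitivity (\sum_A \sum_B (x A * y B) *: omul g (img A) (img B)).
  rewrite bulletE linear_sum; apply: eq_bigr => A _.
  rewrite linear_sum; apply: eq_bigr => B _.
  by rewrite linearZ /= blade_map_blade img_mul scalerA.
rewrite /blade_map omul_sumlZ; apply: eq_bigr => A _.
by rewrite omul_sumrZ scaler_sumr; apply: eq_bigr => B _; rewrite scalerA.
Qed.

Lemma hurwitz_iso_of_blade_basis :
  hurwitz_iso (bullet lam) (cl_one R) (cl_N lam) (omul g) (oct_one R) (onorm g).
Proof.
exists blade_map; split.
- exact: blade_map_is_linear.
- by exists blade_coord; [exact: blade_mapK | exact: blade_coordK].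
- exact: blade_map_bullet.
- by rewrite blade_map_blade.
move=> x; have Nx : bullet lam x (cl_star x) = onorm g (blade_map x) *: cl_one R.
  apply: (can_inj blade_mapK).
  by rewrite blade_map_bullet blade_map_star omul_oconj linearZ /= blade_map_blade img_set0.
by rewrite /cl_N Nx !ffunE eqxx [_ *: _]mulr1.
Qed.

End BladeBasis.

Section Frames.
Variables (R : realType) (p negs : seq nat).
Hypothesis p_perm : perm_eq p (iota 0 8).

(* Blades are indexed by [blade_index], i.e. in the order 1, e1, e2, e12, e3, e13, e23,
   e123, and [oct_unit k] is the k-th coordinate of the nested Cayley--Dickson pairs.
   [frame] sends the blade of index i to [oct_unit p_i], negated when i is in [negs]. *)
Definition frame (A : {set 'I_3}) : Oc R :=
  (-1) ^+ (blade_index A \in negs) *: oct_unit R (nth 0 p (blade_index A)).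

Lemma size_frame_perm : size p = 8.
Proof. by rewrite (perm_size p_perm) size_iota. Qed.

Lemma frame_unit_lt A : (nth 0 p (blade_index A) < 8)%N.
Proof.
have := mem_nth 0 (_ : blade_index A < size p)%N.
by rewrite size_frame_perm (perm_mem p_perm) mem_iota => /(_ (blade_index_lt A)).
Qed.

Lemma frame_set0 : nth 0 p 0 = 0%N -> 0%N \notin negs -> frame set0 = oct_one R.
Proof.
rewrite /frame -setb0 blade_index_setb /= => -> /negPf ->.
by apply: oc_ext; rewrite /= /GRing.scale /=; ring.
Qed.

Lemma frame_orthonormal A B : oc_dot (frame A) (frame B) = (A == B)%:R.
Proof.
rewrite /frame linearZ /= oc_dotC linearZ /= oc_dot_unit ?frame_unit_lt //.
rewrite oc_coord_unit ?frame_unit_lt // nth_uniq ?size_frame_perm ?blade_index_lt //;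
  last by rewrite (perm_uniq p_perm) iota_uniq.
by rewrite (inj_eq blade_index_inj); case: eqP => [->|_]; rewrite ?signrMK ?mulr0.
Qed.

Lemma frame_mul g A B : omul g (frame A) (frame B) =
  ((-1) ^+ (blade_index A \in negs) * (-1) ^+ (blade_index B \in negs) *
   unit_sign g (nth 0 p (blade_index A)) (nth 0 p (blade_index B))) *:
  oct_unit R (xor_index (nth 0 p (blade_index A)) (nth 0 p (blade_index B))).
Proof. by rewrite /frame omulZl omulZr omul_unit ?frame_unit_lt // !scalerA. Qed.

Lemma frame_complete u : \sum_A oc_dot (frame A) u *: frame A = u.
Proof.
pose G k := oc_coord u k *: oct_unit R k.
transitivity (\sum_A G (nth 0 p (blade_index A))).
  apply: eq_bigr => A _; rewrite /frame /G [oc_dot _ u]oc_dotC [oc_dot u _]linearZ /=.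
  rewrite oc_dotC oc_dot_unit ?frame_unit_lt // scalerA mulrAC -expr2 sqrr_sign.
  by rewrite mul1r.
rewrite [LHS](sum_blade_index (fun i => G (nth 0 p i))).
have sum_p : \sum_(k <- p) G k = \sum_(0 <= i < 8) G (nth 0 p i).
  by rewrite (big_nth 0) size_frame_perm.
rewrite -(big_mkord (fun _ => true) (fun i => G (nth 0 p i))) -sum_p.
rewrite (perm_big _ p_perm) -[iota 0 8]/(index_iota 0 8) big_mkord.
exact: oct_unit_decomp.
Qed.

End Frames.

Lemma frame_hurwitz_iso (R : realType) (lam : 'I_3 -> R) (g : R) (p negs : seq nat) :
  perm_eq p (iota 0 8) -> nth 0 p 0 = 0%N -> 0%N \notin negs ->
  (forall A B, omul g (frame R p negs A) (frame R p negs B) =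
               bullet_sign lam A B *: frame R p negs (symd A B)) ->
  hurwitz_iso (bullet lam) (cl_one R) (cl_N lam) (omul g) (oct_one R) (onorm g).
Proof.
move=> p_perm p0 negs0 frame_table; apply: hurwitz_iso_of_blade_basis frame_table.
- exact: frame_set0.
- exact: frame_orthonormal.
- exact: frame_complete.
Qed.

(* After [congr], the index equation p_(i xor j) = p_i xor p_j is closed by computation
   and only the scalar identities are left to [ring]. *)
Ltac solve_frame_table l0 l1 l2 :=
  let A := fresh "A" in let B := fresh "B" in
  let a := fresh "a" in let b := fresh "b" in let c := fresh "c" in
  let a' := fresh "a'" in let b' := fresh "b'" in let c' := fresh "c'" in
  move=> A B; rewrite frame_mul // /frame scalerA;
  elim/set3_ind: A => a b c; elim/set3_ind: B => a' b' c';
  rewrite symd_setb /bullet_sign /conj_sign /cl_sign !cl_swaps_setb !setI_setb;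
  rewrite !prod_setb !card_setb l0 l1 l2 !blade_index_setb;
  case: a; case: b; case: c; case: a'; case: b'; case: c'; rewrite ?inE /=;
  congr (_ *: _); rewrite /unit_sign /oc_coord /= /r_mul /r_conj /GRing.scale /=; ring.

Section Signatures.
Variables (R : realType) (lam : 'I_3 -> R).
Local Notation hurwitz_iso_to g :=
  (hurwitz_iso (bullet lam) (cl_one R) (cl_N lam) (omul g) (oct_one R) (onorm g)).

Lemma frame_iso_ppp : lam i0 = 1 -> lam i1 = 1 -> lam i2 = 1 -> hurwitz_iso_to (-1).
Proof.
move=> l0 l1 l2; apply: (@frame_hurwitz_iso _ _ _ [:: 0; 1; 2; 3; 4; 5; 6; 7] [::]) => //.
solve_frame_table l0 l1 l2.
Qed.

Lemma frame_iso_ppm : lam i0 = 1 -> lam i1 = 1 -> lam i2 = -1 -> hurwitz_iso_to 1.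
Proof.
move=> l0 l1 l2; apply: (@frame_hurwitz_iso _ _ _ [:: 0; 1; 2; 3; 4; 5; 6; 7] [::]) => //.
solve_frame_table l0 l1 l2.
Qed.

Lemma frame_iso_pmp : lam i0 = 1 -> lam i1 = -1 -> lam i2 = 1 -> hurwitz_iso_to 1.
Proof.
move=> l0 l1 l2; apply: (@frame_hurwitz_iso _ _ _ [:: 0; 1; 4; 5; 2; 3; 6; 7] [:: 6; 7]) => //.
solve_frame_table l0 l1 l2.
Qed.

Lemma frame_iso_pmm : lam i0 = 1 -> lam i1 = -1 -> lam i2 = -1 -> hurwitz_iso_to 1.
Proof.
move=> l0 l1 l2; apply: (@frame_hurwitz_iso _ _ _ [:: 0; 1; 4; 5; 6; 7; 2; 3] [:: 5; 6]) => //.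
solve_frame_table l0 l1 l2.
Qed.

Lemma frame_iso_mpp : lam i0 = -1 -> lam i1 = 1 -> lam i2 = 1 -> hurwitz_iso_to 1.
Proof.
move=> l0 l1 l2; apply: (@frame_hurwitz_iso _ _ _ [:: 0; 4; 1; 5; 2; 6; 3; 7] [:: 3; 5]) => //.
solve_frame_table l0 l1 l2.
Qed.

Lemma frame_iso_mpm : lam i0 = -1 -> lam i1 = 1 -> lam i2 = -1 -> hurwitz_iso_to 1.
Proof.
move=> l0 l1 l2.
apply: (@frame_hurwitz_iso _ _ _ [:: 0; 4; 1; 5; 6; 2; 7; 3] [:: 3; 5; 6; 7]) => //.
solve_frame_table l0 l1 l2.
Qed.

Lemma frame_iso_mmp : lam i0 = -1 -> lam i1 = -1 -> lam i2 = 1 -> hurwitz_iso_to 1.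
Proof.
move=> l0 l1 l2.
apply: (@frame_hurwitz_iso _ _ _ [:: 0; 4; 5; 1; 2; 6; 7; 3] [:: 3; 5; 6; 7]) => //.
solve_frame_table l0 l1 l2.
Qed.

Lemma frame_iso_mmm : lam i0 = -1 -> lam i1 = -1 -> lam i2 = -1 -> hurwitz_iso_to 1.
Proof.
move=> l0 l1 l2; apply: (@frame_hurwitz_iso _ _ _ [:: 0; 4; 5; 1; 6; 2; 3; 7] [:: 3; 5]) => //.
solve_frame_table l0 l1 l2.
Qed.

End Signatures.

Theorem mainTheorem5 (R : realType) (p q : nat) (lam : 'I_3 -> R) :
  (p + q = 3)%N ->
  (forall i, lam i = 1 \/ lam i = -1) ->
  #|[set i | lam i == 1]| = p ->
  ((p, q) = (3, 0)%N ->
     hurwitz_iso (bullet lam) (cl_one R) (cl_N lam)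
                 (@oct_mul R) (oct_one R) (@oct_norm R))
  /\
  ((p, q) \in [:: (2, 1); (1, 2); (0, 3)]%N ->
     hurwitz_iso (bullet lam) (cl_one R) (cl_N lam)
                 (@soct_mul R) (oct_one R) (@soct_norm R)).
Proof.
move=> pq_3 lam_sign; rewrite card_eq_set3 => p_def.
have -> : q = (3 - p)%N by rewrite -pq_3 addKn.
have N11 : (-1 == 1 :> R) = false by rewrite eqNr oner_eq0.
case: (lam_sign i0) => l0; case: (lam_sign i1) => l1; case: (lam_sign i2) => l2;
  rewrite -p_def l0 l1 l2 ?eqxx ?N11; split => //= _.
- exact: frame_iso_ppp.
- exact: frame_iso_ppm.
- exact: frame_iso_pmp.
- exact: frame_iso_pmm.
- exact: frame_iso_mpp.
- exact: frame_iso_mpm.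
- exact: frame_iso_mmp.
- exact: frame_iso_mmm.
Qed.
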